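(* Let $\mathbb{D}\subset\mathbb{C}$ be the unit disc and $\mathbb{B}^n\subset\mathbb{R}^n$ ($n\ge 3$) the open unit ball with boundary sphere $S^{n-1}$. Assume $F:\mathbb{D}\to\mathbb{B}^n$ is a conformal minimal immersion with $F(0)=0$, and that for some $z_0$ with $|z_0|=1$, $F$ extends to $z_0$ with $F(z_0)\in S^{n-1}$. If the differential $dF(z_0)$ exists, then $\|dF(z_0)\|\ge 1$.
   Context: A conformal minimal immersion $F=F(x,y)$, $z=x+iy$, is a harmonic immersion with $\langle F_x,F_x\rangle=\langle F_y,F_y\rangle$ and $\langle F_x,F_y\rangle=0$. For such a map $\|dF\|$ equals the common length $|F_x|=|F_y|$. *)

From Stdlib Require Import Reals.
From Coquelicot Require Import Coquelicot.
Open Scope R_scope.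

(* A point z = x + i y of C is represented by the pair of reals (x, y).
   A map into R^n is represented by  F : R -> R -> (nat -> R),
   only components i < n being relevant. *)

Fixpoint sqnorm (n : nat) (v : nat -> R) : R :=
  match n with O => 0 | S k => sqnorm k v + v k * v k end.
Fixpoint inner (n : nat) (v w : nat -> R) : R :=
  match n with O => 0 | S k => inner k v w + v k * w k end.

Definition in_disc (x y : R) : Prop := x * x + y * y < 1.

Definition dx (f : R -> R -> R) (x y : R) : R := Derive (fun t => f t y) x.
Definition dy (f : R -> R -> R) (x y : R) : R := Derive (fun t => f x t) y.

Definition jcont (g : R -> R -> R) (x y : R) : Prop :=
  continuous (fun p : R * R => g (fst p) (snd p)) (x, y).

Definition C2_at (f : R -> R -> R) (x y : R) : Prop :=
  ex_derive (fun t => f t y) x /\ ex_derive (fun t => f x t) y /\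
  ex_derive (fun t => dx f t y) x /\ ex_derive (fun t => dx f x t) y /\
  ex_derive (fun t => dy f t y) x /\ ex_derive (fun t => dy f x t) y /\
  jcont f x y /\ jcont (dx f) x y /\ jcont (dy f) x y /\
  jcont (dx (dx f)) x y /\ jcont (dy (dx f)) x y /\
  jcont (dx (dy f)) x y /\ jcont (dy (dy f)) x y.

Definition comp (F : R -> R -> nat -> R) (i : nat) : R -> R -> R :=
  fun x y => F x y i.

Definition Fx (F : R -> R -> nat -> R) (x y : R) : nat -> R :=
  fun i => dx (comp F i) x y.
Definition Fy (F : R -> R -> nat -> R) (x y : R) : nat -> R :=
  fun i => dy (comp F i) x y.

Definition harmonic_on_disc (n : nat) (F : R -> R -> nat -> R) : Prop :=
  forall x y, in_disc x y -> forall i, (i < n)%nat ->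
    C2_at (comp F i) x y /\
    dx (dx (comp F i)) x y + dy (dy (comp F i)) x y = 0.

Definition immersion_on_disc (n : nat) (F : R -> R -> nat -> R) : Prop :=
  forall x y, in_disc x y -> forall a b : R,
    (forall i, (i < n)%nat -> a * Fx F x y i + b * Fy F x y i = 0) ->
    a = 0 /\ b = 0.

Definition conformal_on_disc (n : nat) (F : R -> R -> nat -> R) : Prop :=
  forall x y, in_disc x y ->
    inner n (Fx F x y) (Fx F x y) = inner n (Fy F x y) (Fy F x y) /\
    inner n (Fx F x y) (Fy F x y) = 0.

Definition conformal_minimal_immersion (n : nat) (F : R -> R -> nat -> R) : Prop :=
  harmonic_on_disc n F /\ immersion_on_disc n F /\ conformal_on_disc n F.

Definition maps_disc_into_ball (n : nat) (F : R -> R -> nat -> R) : Prop :=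
  forall x y, in_disc x y -> sqnorm n (F x y) < 1.

Definition in_dom (x0 y0 x y : R) : Prop := in_disc x y \/ (x = x0 /\ y = y0).

Definition extends_to (n : nat) (F : R -> R -> nat -> R) (x0 y0 : R) : Prop :=
  forall eps, 0 < eps -> exists delta, 0 < delta /\
    forall x y, in_dom x0 y0 x y ->
      (x - x0) * (x - x0) + (y - y0) * (y - y0) < delta * delta ->
      sqnorm n (fun i => F x y i - F x0 y0 i) < eps * eps.

(* The linear map L : R^2 -> R^n, L(u,v) = u a + v b (columns a, b), is the
   differential of F (restricted to D ∪ {z0}) at z0 = (x0,y0). *)
Definition is_differential_at (n : nat) (F : R -> R -> nat -> R) (x0 y0 : R)
    (a b : nat -> R) : Prop :=
  forall eps, 0 < eps -> exists delta, 0 < delta /\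
    forall x y, in_dom x0 y0 x y ->
      (x - x0) * (x - x0) + (y - y0) * (y - y0) < delta * delta ->
      sqrt (sqnorm n (fun i => F x y i - F x0 y0 i
                                - ((x - x0) * a i + (y - y0) * b i)))
      <= eps * sqrt ((x - x0) * (x - x0) + (y - y0) * (y - y0)).

Definition opnorm (n : nat) (a b : nat -> R) : Rbar :=
  Lub_Rbar (fun r => exists u v : R, u * u + v * v = 1 /\
              r = sqrt (sqnorm n (fun i => u * a i + v * b i))).

From Pilot Require Import Defs.
From Stdlib Require Import Reals Lra Lia.
From Coquelicot Require Import Coquelicot.
From mathcomp Require all_boot all_order all_algebra all_classical all_reals.
From mathcomp Require topology normedtype derive.
From mathcomp Require Rstruct Rstruct_topology.
Open Scope R_scope.

(* For a conformal harmonic map [F] and [r = |z|^2], the function [r^(-a) |F|^2] is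
   subharmonic: its Laplacian is [4 r^(-a-1) |x F_x + y F_y - a F|^2].  Hence
   [r^(-a) |F|^2 + eta r] has no interior maximum (its second derivatives along the two axes
   cannot both be nonpositive), so on an annulus [d1 <= r <= d2] it is bounded by its boundary
   values.  As [F(0) = 0], [|F|^2 = O(r)] makes the inner boundary value at most 1 for small
   [d1], and [|F| < 1] bounds the outer one by [d2^(-a)].  Letting [eta -> 0], then
   [a, d2 -> 1], gives the Schwarz lemma [|F(z)| <= |z|].  Finally, with [w = dF(z0) z0],
   comparing [|F(z0)| = 1] with [|F((1-s) z0)| <= 1 - s] forces [|w| >= 1], and
   [|w| <= ||dF(z0)||] because [z0] is a unit vector. *)

Lemma sqnorm_ge0 n v : 0 <= sqnorm n v.
Proof. induction n; simpl; nra. Qed.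

Lemma sqnorm_inner n v : sqnorm n v = inner n v v.
Proof. induction n; simpl; [reflexivity | now rewrite IHn]. Qed.

Lemma inner_sym n u v : inner n u v = inner n v u.
Proof. induction n; simpl; [reflexivity | rewrite IHn; ring]. Qed.

Lemma sqnorm_ext n u v :
  (forall i, (i < n)%nat -> u i = v i) -> sqnorm n u = sqnorm n v.
Proof.
  induction n; intros H; simpl; [reflexivity|].
  rewrite IHn, H; [reflexivity | lia | intros; apply H; lia].
Qed.

Lemma inner_sum_eq0 n u v w :
  (forall i, (i < n)%nat -> v i + w i = 0) -> inner n u v + inner n u w = 0.
Proof.
  induction n; intros H; simpl; [ring|].
  assert (Hn := H n (Nat.lt_succ_diag_r n)).
  replace (u n * w n) with (- (u n * v n)) by nra.
  rewrite <- (IHn (fun i Hi => H i (Nat.lt_lt_succ_r _ _ Hi))). ring.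
Qed.

Lemma sqnorm_scal n c u : sqnorm n (fun i => c * u i) = c * c * sqnorm n u.
Proof. induction n; simpl; [ring | rewrite IHn; ring]. Qed.

Lemma sqnorm_comb2 n p q u v :
  sqnorm n (fun i => p * u i + q * v i) =
  p * p * sqnorm n u + 2 * p * q * inner n u v + q * q * sqnorm n v.
Proof. induction n; simpl; [ring | rewrite IHn; ring]. Qed.

Lemma sqnorm_comb3 n p q c u v w :
  sqnorm n (fun i => p * u i + q * v i + c * w i) =
  p * p * sqnorm n u + q * q * sqnorm n v + c * c * sqnorm n w
  + 2 * p * q * inner n u v + 2 * p * c * inner n u w + 2 * q * c * inner n v w.
Proof. induction n; simpl; [ring | rewrite IHn; ring]. Qed.

(* Lagrange's identity, inductively: passing from [n] to [n+1] coordinates adds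
   [|u_n v - v_n u|^2] to [|u|^2 |v|^2 - <u,v>^2]. *)
Lemma Cauchy_Schwarz n u v : inner n u v * inner n u v <= sqnorm n u * sqnorm n v.
Proof.
  induction n; simpl; [lra|].
  pose proof (sqnorm_ge0 n (fun i => u n * v i + - v n * u i)) as Hd.
  rewrite sqnorm_comb2, inner_sym in Hd. nra.
Qed.

Definition vnorm n v := sqrt (sqnorm n v).

Lemma vnorm_ext n u v :
  (forall i, (i < n)%nat -> u i = v i) -> vnorm n u = vnorm n v.
Proof. intros H; unfold vnorm; now rewrite (sqnorm_ext n u v H). Qed.

Lemma vnorm_scal n c u : vnorm n (fun i => c * u i) = Rabs c * vnorm n u.
Proof.
  unfold vnorm. rewrite sqnorm_scal, sqrt_mult_alt by apply Rle_0_sqr.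
  now rewrite <- sqrt_Rsqr_abs.
Qed.

Lemma inner_le_vnorm n u v : inner n u v <= vnorm n u * vnorm n v.
Proof.
  unfold vnorm. rewrite <- sqrt_mult by apply sqnorm_ge0.
  destruct (Rle_or_lt (inner n u v) 0) as [Hneg | Hpos].
  - pose proof (sqrt_pos (sqnorm n u * sqnorm n v)); lra.
  - rewrite <- (sqrt_square (inner n u v)) by lra.
    apply sqrt_le_1_alt, Cauchy_Schwarz.
Qed.

Lemma vnorm_triangle n u v : vnorm n (fun i => u i + v i) <= vnorm n u + vnorm n v.
Proof.
  assert (Hu := sqrt_pos (sqnorm n u)); assert (Hv := sqrt_pos (sqnorm n v)).
  apply Rsqr_incr_0_var; [| unfold vnorm; lra].
  unfold Rsqr, vnorm. rewrite sqrt_sqrt by apply sqnorm_ge0.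
  rewrite (sqnorm_ext n _ (fun i => 1 * u i + 1 * v i)) by (intros; ring).
  rewrite sqnorm_comb2.
  rewrite <- (sqrt_sqrt (sqnorm n u)), <- (sqrt_sqrt (sqnorm n v)) at 1 by apply sqnorm_ge0.
  pose proof (inner_le_vnorm n u v) as Hi; unfold vnorm in Hi. nra.
Qed.

Lemma local_max_second_derivative_nonpos (phi phi1 : R -> R) (t0 d L : R) :
  0 < d ->
  (forall t, Rabs (t - t0) < d -> derivable_pt_lim phi t (phi1 t)) ->
  derivable_pt_lim phi1 t0 L ->
  (forall t, Rabs (t - t0) < d -> phi t <= phi t0) ->
  L <= 0.
Proof.
  intros Hd Hphi Hphi1 Hmax.
  assert (Ht0 : Rabs (t0 - t0) < d) by (rewrite Rminus_diag, Rabs_R0; exact Hd).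
  assert (Hcrit : phi1 t0 = 0).
  { pose (pr := exist _ (phi1 t0) (Hphi t0 Ht0) : derivable_pt phi t0).
    change (phi1 t0) with (derive_pt phi t0 pr).
    apply (deriv_maximum phi (t0 - d) (t0 + d)); try lra.
    intros t H1 H2; apply Hmax, Rabs_def1; lra. }
  apply Rnot_lt_le; intros HL.
  destruct (Hphi1 (L / 2) ltac:(lra)) as [[del Hdel] Hquot].
  set (h := Rmin del d / 2).
  assert (Hh : 0 < h < Rmin del d).
  { assert (0 < Rmin del d) by now apply Rmin_pos. unfold h; lra. }
  pose proof (Rmin_l del d); pose proof (Rmin_r del d).
  destruct (MVT_cor2 phi phi1 t0 (t0 + h)) as [c [Hmvt Hc]]; [lra | |].
  { intros c Hc; apply Hphi, Rabs_def1; lra. }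
  assert (Hslope : 0 < phi1 c).
  { assert (Hne : c - t0 <> 0) by (intro; lra).
    assert (Hnear : Rabs (c - t0) < del) by (apply Rabs_def1; lra).
    specialize (Hquot (c - t0) Hne Hnear).
    replace (t0 + (c - t0)) with c in Hquot by ring.
    rewrite Hcrit, Rminus_0_r in Hquot. apply Rabs_def2 in Hquot.
    assert (0 < phi1 c / (c - t0)) by lra.
    replace (phi1 c) with (phi1 c / (c - t0) * (c - t0)) by (field; lra). nra. }
  assert (Hle := Hmax (t0 + h) ltac:(apply Rabs_def1; lra)).
  nra.
Qed.

Lemma derivable_pt_lim_inner n (f g : R -> nat -> R) (df dg : nat -> R) t :
  (forall i, (i < n)%nat -> derivable_pt_lim (fun s => f s i) t (df i)) ->
  (forall i, (i < n)%nat -> derivable_pt_lim (fun s => g s i) t (dg i)) ->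
  derivable_pt_lim (fun s => inner n (f s) (g s)) t (inner n df (g t) + inner n (f t) dg).
Proof.
  induction n; intros Hf Hg; simpl.
  - rewrite Rplus_0_r. apply derivable_pt_lim_const.
  - replace (inner n df (g t) + df n * g t n + (inner n (f t) dg + f t n * dg n))
      with (inner n df (g t) + inner n (f t) dg + (df n * g t n + f t n * dg n)) by ring.
    apply (derivable_pt_lim_plus (fun s => inner n (f s) (g s)) (fun s => f s n * g s n)).
    + apply IHn; intros i Hi; [apply Hf | apply Hg]; lia.
    + apply (derivable_pt_lim_mult (fun s => f s n) (fun s => g s n)); [apply Hf | apply Hg]; lia.
Qed.

Lemma derivable_pt_lim_sqnorm n (f : R -> nat -> R) (df : nat -> R) t :
  (forall i, (i < n)%nat -> derivable_pt_lim (fun s => f s i) t (df i)) ->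
  derivable_pt_lim (fun s => sqnorm n (f s)) t (2 * inner n (f t) df).
Proof.
  intros Hf.
  apply (derivable_pt_lim_ext (fun s => inner n (f s) (f s))); [intros; now rewrite sqnorm_inner|].
  replace (2 * inner n (f t) df) with (inner n df (f t) + inner n (f t) df)
    by (rewrite inner_sym; ring).
  now apply derivable_pt_lim_inner.
Qed.

Definition weight a k s := Rpower (s * s + k) (- a).

Lemma derivable_pt_lim_weight a k t : 0 < t * t + k ->
  derivable_pt_lim (weight a k) t (weight a k t * (-2 * a * t / (t * t + k))).
Proof. intros Hr; apply is_derive_Reals; unfold weight, Rpower; auto_derive; [lra | field; lra]. Qed.

Lemma derivable_pt_lim_derive_weight a k t : 0 < t * t + k ->
  derivable_pt_lim (fun s => weight a k s * (-2 * a * s / (s * s + k))) t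
    (weight a k t * (-2 * a * t / (t * t + k)) * (-2 * a * t / (t * t + k))
     + weight a k t * (-2 * a) * (t * t + k - 2 * t * t) / ((t * t + k) * (t * t + k))).
Proof. intros Hr; apply is_derive_Reals; unfold weight, Rpower; auto_derive; [lra | field; lra]. Qed.

(* The second derivative at [t] of [s |-> (s^2+k)^(-a) |G s|^2 + eta (s^2+k)],
   when [G t = G0], [G' t = G1], [G'' t = G2]. *)
Definition line_d2 n a eta k t (G0 G1 G2 : nat -> R) : R :=
  let r := t * t + k in
  let h := weight a k t in
  let h1 := h * (-2 * a * t / r) in
  let h2 := h1 * (-2 * a * t / r) + h * (-2 * a) * (r - 2 * t * t) / (r * r) in
  h2 * sqnorm n G0 + 4 * h1 * inner n G0 G1 + 2 * h * (sqnorm n G1 + inner n G0 G2) + 2 * eta.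

Lemma line_d2_nonpos_of_local_max n a eta k t0 d (G G1 : R -> nat -> R) (G2 : nat -> R) :
  0 < d ->
  (forall t, Rabs (t - t0) < d -> 0 < t * t + k) ->
  (forall t, Rabs (t - t0) < d -> forall i, (i < n)%nat ->
     derivable_pt_lim (fun s => G s i) t (G1 t i)) ->
  (forall i, (i < n)%nat -> derivable_pt_lim (fun s => G1 s i) t0 (G2 i)) ->
  (forall t, Rabs (t - t0) < d ->
     weight a k t * sqnorm n (G t) + eta * (t * t + k) <=
     weight a k t0 * sqnorm n (G t0) + eta * (t0 * t0 + k)) ->
  line_d2 n a eta k t0 (G t0) (G1 t0) G2 <= 0.
Proof.
  intros Hd Hr HG HG1 Hmax.
  assert (Ht0 : Rabs (t0 - t0) < d) by (rewrite Rminus_diag, Rabs_R0; exact Hd).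
  apply (local_max_second_derivative_nonpos
           (fun s => weight a k s * sqnorm n (G s) + eta * (s * s + k))
           (fun s => weight a k s * (-2 * a * s / (s * s + k)) * sqnorm n (G s)
                     + weight a k s * (2 * inner n (G s) (G1 s)) + eta * (2 * s))
           t0 d); [exact Hd | | | exact Hmax].
  - intros t Ht. apply derivable_pt_lim_plus.
    + apply derivable_pt_lim_mult.
      * now apply derivable_pt_lim_weight, Hr.
      * now apply derivable_pt_lim_sqnorm, HG.
    + apply is_derive_Reals; auto_derive; [easy | ring].
  - assert (Hsq := derivable_pt_lim_sqnorm n G (G1 t0) t0 (HG t0 Ht0)).
    assert (Hin := derivable_pt_lim_inner n G G1 (G1 t0) G2 t0 (HG t0 Ht0) HG1).
    assert (Heta : derivable_pt_lim (fun s => eta * (2 * s)) t0 (2 * eta))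
      by (apply is_derive_Reals; auto_derive; [easy | ring]).
    assert (Hall := derivable_pt_lim_plus _ _ _ _ _
      (derivable_pt_lim_plus _ _ _ _ _
         (derivable_pt_lim_mult _ _ _ _ _ (derivable_pt_lim_derive_weight a k t0 (Hr t0 Ht0)) Hsq)
         (derivable_pt_lim_mult _ _ _ _ _ (derivable_pt_lim_weight a k t0 (Hr t0 Ht0))
            (derivable_pt_lim_scal _ 2 _ _ Hin)))
      Heta).
    unfold mult_real_fct in Hall; cbv beta in Hall.
    match type of Hall with derivable_pt_lim _ _ ?l =>
      replace (line_d2 n a eta k t0 (G t0) (G1 t0) G2) with l
        by (unfold line_d2; cbv zeta; rewrite !sqnorm_inner; ring) end.
    exact Hall.
Qed.

Lemma weight_swap a x y : weight a (y * y) x = weight a (x * x) y.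
Proof. unfold weight; now rewrite Rplus_comm. Qed.

(* Summing the two axis second derivatives gives the Laplacian of
   [r^(-a) |F|^2 + eta r] (with [r = x^2 + y^2]); for conformal harmonic [F] it
   completes to the square [4 r^(-a-1) |x F_x + y F_y - a F|^2 + 4 eta]. *)
Lemma line_d2_sum_pos n a eta x y (F0 X Y Fxx Fyy : nat -> R) :
  0 < eta -> 0 < x * x + y * y ->
  inner n X X = inner n Y Y -> inner n X Y = 0 ->
  inner n F0 Fxx + inner n F0 Fyy = 0 ->
  0 < line_d2 n a eta (y * y) x F0 X Fxx + line_d2 n a eta (x * x) y F0 Y Fyy.
Proof.
  intros Heta Hr HXY HXY0 Hharm.
  assert (Hsq := sqnorm_ge0 n (fun i => x * X i + y * Y i + - a * F0 i)).
  rewrite sqnorm_comb3, !sqnorm_inner, HXY0, <- HXY, (inner_sym n X F0), (inner_sym n Y F0) in Hsq.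
  assert (Hh : 0 < weight a (x * x) y) by apply exp_pos.
  unfold line_d2; cbv zeta.
  rewrite <- weight_swap, (Rplus_comm (y * y)), !sqnorm_inner, <- HXY.
  replace (inner n F0 Fyy) with (- inner n F0 Fxx) by lra.
  set (h := weight a (x * x) y) in *; set (r := x * x + y * y) in *.
  match goal with |- 0 < ?e =>
    replace e with (4 * (h / r) * (x * x * inner n X X + y * y * inner n X X
      + - a * - a * inner n F0 F0 + 2 * x * (- a) * inner n F0 X
      + 2 * y * (- a) * inner n F0 Y) + 4 * eta) by (unfold r; field; fold r; lra) end.
  assert (0 < h / r) by (apply Rdiv_lt_0_compat; assumption).
  nra.
Qed.

Section HarmonicMaps.

Variables (n : nat) (F : R -> R -> nat -> R).
Hypothesis HF : harmonic_on_disc n F.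

Lemma harmonic_derive_x x y i : in_disc x y -> (i < n)%nat ->
  derivable_pt_lim (fun t => F t y i) x (Fx F x y i).
Proof. intros Hd Hi; apply is_derive_Reals, Derive_correct, (HF x y Hd i Hi). Qed.

Lemma harmonic_derive_y x y i : in_disc x y -> (i < n)%nat ->
  derivable_pt_lim (fun t => F x t i) y (Fy F x y i).
Proof. intros Hd Hi; apply is_derive_Reals, Derive_correct, (HF x y Hd i Hi). Qed.

Lemma harmonic_derive_xx x y i : in_disc x y -> (i < n)%nat ->
  derivable_pt_lim (fun t => Fx F t y i) x (dx (dx (Defs.comp F i)) x y).
Proof. intros Hd Hi; apply is_derive_Reals, Derive_correct, (HF x y Hd i Hi). Qed.

Lemma harmonic_derive_yy x y i : in_disc x y -> (i < n)%nat ->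
  derivable_pt_lim (fun t => Fy F x t i) y (dy (dy (Defs.comp F i)) x y).
Proof. intros Hd Hi; apply is_derive_Reals, Derive_correct, (HF x y Hd i Hi). Qed.

Lemma harmonic_laplacian x y i : in_disc x y -> (i < n)%nat ->
  dx (dx (Defs.comp F i)) x y + dy (dy (Defs.comp F i)) x y = 0.
Proof. intros Hd Hi; apply (HF x y Hd i Hi). Qed.

Lemma harmonic_jcont x y i : in_disc x y -> (i < n)%nat -> jcont (Defs.comp F i) x y.
Proof. intros Hd Hi; apply (HF x y Hd i Hi). Qed.

Lemma harmonic_jcont_dx x y i : in_disc x y -> (i < n)%nat -> jcont (dx (Defs.comp F i)) x y.
Proof. intros Hd Hi; apply (HF x y Hd i Hi). Qed.

Lemma harmonic_jcont_dy x y i : in_disc x y -> (i < n)%nat -> jcont (dy (Defs.comp F i)) x y.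
Proof. intros Hd Hi; apply (HF x y Hd i Hi). Qed.

End HarmonicMaps.

Definition axis_local_max (g : R -> R -> R) (x y : R) : Prop :=
  exists d, 0 < d /\
    (forall s, Rabs (s - x) < d -> g s y <= g x y) /\
    (forall s, Rabs (s - y) < d -> g x s <= g x y).

Lemma Rabs_sqr_sub_le x s d : Rabs x <= 1 -> d <= 1 -> Rabs (s - x) < d ->
  Rabs (s * s - x * x) <= 3 * d.
Proof.
  intros Hx Hd Hs.
  replace (s * s - x * x) with ((s - x) * ((s - x) + 2 * x)) by ring.
  rewrite Rabs_mult.
  assert (Rabs (s - x + 2 * x) <= 3).
  { eapply Rle_trans; [apply Rabs_triang|].
    rewrite Rabs_mult, (Rabs_right 2) by lra. lra. }
  pose proof (Rabs_pos (s - x)); pose proof (Rabs_pos (s - x + 2 * x)). nra.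
Qed.

Lemma axis_neighbourhood_in_annulus x y lo hi :
  lo < x * x + y * y < hi -> hi <= 1 ->
  exists d, 0 < d /\
    (forall s, Rabs (s - x) < d -> lo < s * s + y * y < hi) /\
    (forall s, Rabs (s - y) < d -> lo < x * x + s * s < hi).
Proof.
  intros Hr Hhi.
  assert (Hx : Rabs x <= 1) by (apply Rabs_le; split; nra).
  assert (Hy : Rabs y <= 1) by (apply Rabs_le; split; nra).
  set (r := x * x + y * y) in *.
  exists (Rmin 1 (Rmin ((r - lo) / 4) ((hi - r) / 4))).
  assert (H1 := Rmin_l 1 (Rmin ((r - lo) / 4) ((hi - r) / 4))).
  assert (H2 := Rmin_r 1 (Rmin ((r - lo) / 4) ((hi - r) / 4))).
  assert (H3 := Rmin_l ((r - lo) / 4) ((hi - r) / 4)).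
  assert (H4 := Rmin_r ((r - lo) / 4) ((hi - r) / 4)).
  split; [repeat apply Rmin_pos; lra|].
  split; intros s Hs.
  - apply (Rabs_sqr_sub_le x s) in Hs; [| exact Hx | exact H1].
    apply Rabs_le_between in Hs. unfold r in *. lra.
  - apply (Rabs_sqr_sub_le y s) in Hs; [| exact Hy | exact H1].
    apply Rabs_le_between in Hs. unfold r in *. lra.
Qed.

Definition perturbed_ratio n F a eta (x y : R) : R :=
  weight a (y * y) x * sqnorm n (F x y) + eta * (x * x + y * y).

Lemma perturbed_ratio_no_axis_max n F a eta x y :
  harmonic_on_disc n F -> conformal_on_disc n F -> 0 < eta ->
  0 < x * x + y * y < 1 -> ~ axis_local_max (perturbed_ratio n F a eta) x y.
Proof.
  intros HF HC Heta Hr [d [Hd [Mx My]]].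
  destruct (axis_neighbourhood_in_annulus x y 0 1 Hr (Rle_refl 1)) as [d' [Hd' [Nx Ny]]].
  set (e := Rmin d d').
  assert (He : 0 < e) by now apply Rmin_pos.
  assert (Hed : e <= d) by apply Rmin_l; assert (Hed' : e <= d') by apply Rmin_r.
  assert (Hdisc : in_disc x y) by (unfold in_disc; lra).
  destruct (HC x y Hdisc) as [Hiso Horth].
  assert (Hsum := line_d2_sum_pos n a eta x y (F x y) (Fx F x y) (Fy F x y)
    (fun i => dx (dx (Defs.comp F i)) x y) (fun i => dy (dy (Defs.comp F i)) x y)
    Heta (proj1 Hr) Hiso Horth
    (inner_sum_eq0 _ _ _ _ (fun i Hi => harmonic_laplacian n F HF x y i Hdisc Hi))).
  assert (Hx : line_d2 n a eta (y * y) x (F x y) (Fx F x y)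
                 (fun i => dx (dx (Defs.comp F i)) x y) <= 0).
  { apply (line_d2_nonpos_of_local_max n a eta (y * y) x e (fun s => F s y) (fun s => Fx F s y));
      [exact He | | | | ].
    - intros s Hs; apply Nx; lra.
    - intros s Hs i Hi. apply (harmonic_derive_x n F HF); [|exact Hi].
      unfold in_disc; specialize (Nx s ltac:(lra)); lra.
    - intros i Hi; now apply (harmonic_derive_xx n F HF).
    - intros s Hs; apply Mx; lra. }
  assert (Hy : line_d2 n a eta (x * x) y (F x y) (Fy F x y)
                 (fun i => dy (dy (Defs.comp F i)) x y) <= 0).
  { apply (line_d2_nonpos_of_local_max n a eta (x * x) y e (fun s => F x s) (fun s => Fy F x s));
      [exact He | | | | ].
    - intros s Hs; rewrite Rplus_comm; apply Ny; lra.
    - intros s Hs i Hi. apply (harmonic_derive_y n F HF); [|exact Hi].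
      unfold in_disc; specialize (Ny s ltac:(lra)); lra.
    - intros i Hi; now apply (harmonic_derive_yy n F HF).
    - intros s Hs. assert (Hm := My s ltac:(lra)). unfold perturbed_ratio in Hm.
      rewrite <- (weight_swap a x s), <- (weight_swap a x y), (Rplus_comm (s * s)), (Rplus_comm (y * y)).
      exact Hm. }
  lra.
Qed.

Lemma jcont_const c x y : jcont (fun _ _ => c) x y.
Proof. apply continuous_const. Qed.

Lemma jcont_plus f g x y :
  jcont f x y -> jcont g x y -> jcont (fun u v => f u v + g u v) x y.
Proof. intros Hf Hg; apply (continuous_plus _ _ _ Hf Hg). Qed.

Lemma jcont_mult f g x y :
  jcont f x y -> jcont g x y -> jcont (fun u v => f u v * g u v) x y.
Proof. intros Hf Hg; apply (continuous_mult _ _ _ Hf Hg). Qed.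

Lemma jcont_comp (h : R -> R) f x y :
  jcont f x y -> continuous h (f x y) -> jcont (fun u v => h (f u v)) x y.
Proof. intros Hf Hh; apply (continuous_comp _ h _ Hf Hh). Qed.

Lemma jcont_sqr_sum x y : jcont (fun u v => u * u + v * v) x y.
Proof.
  apply jcont_plus; apply jcont_mult;
    [apply (continuous_fst _ y) | apply (continuous_fst _ y)
    | apply (continuous_snd x) | apply (continuous_snd x)].
Qed.

Lemma jcont_sqnorm n (F : R -> R -> nat -> R) x y :
  (forall i, (i < n)%nat -> jcont (Defs.comp F i) x y) ->
  jcont (fun u v => sqnorm n (F u v)) x y.
Proof.
  induction n; intros HF; simpl; [apply jcont_const|].
  apply jcont_plus; [apply IHn; intros i Hi; apply HF; lia|].
  apply jcont_mult; apply HF; lia.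
Qed.

Lemma jcont_box g x y : jcont g x y -> forall eps, 0 < eps -> exists del, 0 < del /\
  forall u v, Rabs (u - x) < del -> Rabs (v - y) < del -> Rabs (g u v - g x y) < eps.
Proof.
  intros Hg eps Heps.
  destruct (Hg (ball (g x y) eps) (locally_ball _ (mkposreal _ Heps))) as [del Hdel].
  exists del; split; [apply cond_pos|].
  intros u v Hu Hv; apply (Hdel (u, v)); split; assumption.
Qed.

Lemma perturbed_ratio_jcont n F a eta x y :
  harmonic_on_disc n F -> 0 < x * x + y * y < 1 ->
  jcont (perturbed_ratio n F a eta) x y.
Proof.
  intros HF Hr.
  assert (Hdisc : in_disc x y) by (unfold in_disc; lra).
  apply jcont_plus; [apply jcont_mult | apply jcont_mult; [apply jcont_const | apply jcont_sqr_sum]].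
  - apply (jcont_comp (fun r => Rpower r (- a)) (fun u v => u * u + v * v));
      [apply jcont_sqr_sum|].
    apply (ex_derive_continuous (V := R_NormedModule)); unfold Rpower; auto_derive; lra.
  - apply jcont_sqnorm; intros i Hi; now apply (harmonic_jcont n F HF).
Qed.

Module AnnulusCompact.
Import all_boot all_order all_algebra all_classical all_reals topology normedtype derive.
Import Rstruct Rstruct_topology Num.Theory numFieldNormedType.Exports.
Local Open Scope classical_set_scope.

Lemma jcont_continuous_at (g : R -> R -> R) x y :
  jcont g x y -> {for (x, y), continuous (fun p : R * R => g p.1 p.2)}.
Proof.
move=> /jcont_box Hg.
have [_ P] := @cvgrPdist_lt R R^o _ (nbhs (x, y)) _ (fun p : R * R => g p.1 p.2) (g x y).
apply: P => e /RltP e0.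
have [d [/RltP d0 Hd]] := Hg e e0.
apply/nbhs_ballP; exists d => //= -[u v] [/= bu bv].
by rewrite distrC -RabsE; apply/RltP/Hd; apply/RltP; rewrite RabsE distrC.
Qed.

Lemma annulus_argmax (g : R -> R -> R) (d1 d2 : R) :
  0 < d1 <= d2 ->
  (forall x y, d1 <= x * x + y * y <= d2 -> jcont g x y) ->
  exists cx cy, (d1 <= cx * cx + cy * cy <= d2) /\
    forall x y, d1 <= x * x + y * y <= d2 -> g x y <= g cx cy.
Proof.
move=> [d1p d12] gc.
pose rho := fun p : R * R => p.1 * p.1 + p.2 * p.2.
have rho_cont : continuous rho.
  by move=> [x y]; apply: (jcont_continuous_at (fun u v => u * u + v * v)); apply: jcont_sqr_sum.
pose K := rho @^-1` [set r | (d1 <= r)%O] `&` rho @^-1` [set r | (r <= d2)%O].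
have K_closed : closed K.
  by apply: closedI; apply: (@preimage_closed _ R rho);
    [move=> p _; exact: rho_cont | exact: closed_ge | move=> p _; exact: rho_cont | exact: closed_le].
pose M := Rplus d2 1.
have K_compact : compact K.
  apply: (@subclosed_compact _ K (`[- M, M]%classic `*` `[- M, M]%classic)) => //.
    by apply: compact_setX; apply: segment_compact.
  move=> [x y] [/= /RleP h1 /RleP h2]; rewrite /rho /= in h1 h2.
  have hx : Rle (- M) x /\ Rle x M by rewrite /M; split; apply: Rnot_lt_le => hh; nra.
  have hy : Rle (- M) y /\ Rle y M by rewrite /M; split; apply: Rnot_lt_le => hh; nra.
  by split; rewrite /= in_itv /=; apply/andP; split; apply/RleP; tauto.
have K_nonempty : K !=set0.
  exists (sqrt d1, 0%R); rewrite /K /rho /= sqrt_sqrt; last by apply: Rlt_le.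
  by rewrite Rmult_0_l Rplus_0_r; split; apply/RleP => //=; apply: Rle_refl.
have g_cont : {within K, continuous (fun p : R * R => g p.1 p.2)}.
  apply: continuous_in_subspaceT => -[x y]; rewrite inE => -[/= /RleP h1 /RleP h2].
  exact: jcont_continuous_at (gc x y (conj h1 h2)).
have [[cx cy] cK cmax] := compact_EVT_max K_nonempty K_compact g_cont.
exists cx, cy; move: cK; rewrite inE => -[/= /RleP h1 /RleP h2]; split => //.
by move=> x y [hx hy]; apply/RleP; apply: (cmax (x, y)); rewrite inE; split; apply/RleP.
Qed.

End AnnulusCompact.

Lemma annulus_max_on_boundary (g : R -> R -> R) d1 d2 x y :
  0 < d1 <= d2 -> d2 <= 1 ->
  (forall u v, d1 <= u * u + v * v <= d2 -> jcont g u v) ->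
  (forall u v, d1 < u * u + v * v < d2 -> ~ axis_local_max g u v) ->
  d1 <= x * x + y * y <= d2 ->
  exists cx cy, (cx * cx + cy * cy = d1 \/ cx * cx + cy * cy = d2) /\ g x y <= g cx cy.
Proof.
  intros Hd Hd2 Hcont Hnomax Hxy.
  destruct (AnnulusCompact.annulus_argmax g d1 d2 Hd Hcont) as [cx [cy [[Hc1 Hc2] Hmax]]].
  exists cx, cy; split; [| now apply Hmax].
  destruct (Rle_lt_or_eq_dec _ _ Hc1) as [Hin1 | Hbd1]; [| now left].
  destruct (Rle_lt_or_eq_dec _ _ Hc2) as [Hin2 | Hbd2]; [| now right].
  exfalso; apply (Hnomax cx cy (conj Hin1 Hin2)).
  destruct (axis_neighbourhood_in_annulus cx cy d1 d2 (conj Hin1 Hin2) Hd2)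
    as [d [Hd0 [Nx Ny]]].
  exists d; split; [exact Hd0 | split]; intros s Hs; apply Hmax.
  - specialize (Nx s Hs); lra.
  - specialize (Ny s Hs); lra.
Qed.

Lemma Rpower_neg_ge1 a d : 0 <= a -> 0 < d <= 1 -> 1 <= Rpower d (- a).
Proof.
  intros Ha Hd. unfold Rpower. rewrite <- exp_0.
  destruct (Rle_lt_or_eq_dec _ _ (proj2 Hd)) as [Hlt | ->].
  - assert (ln d < 0) by (rewrite <- ln_1; apply ln_increasing; lra).
    destruct (Rle_lt_or_eq_dec _ _ Ha) as [Hpos | <-].
    + left; apply exp_increasing; nra.
    + right; f_equal; ring.
  - rewrite ln_1, Rmult_0_r; lra.
Qed.

Lemma Rpower_opp_mult x a : 0 < x -> Rpower x (- a) * Rpower x a = 1.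
Proof. intros Hx; rewrite <- Rpower_plus, Rplus_opp_l; now apply Rpower_O. Qed.

(* The maximum principle for [perturbed_ratio] on the annulus [d1 <= r <= d2], letting [eta -> 0]. *)
Lemma weighted_sqnorm_le_outer n F a d1 d2 x y :
  harmonic_on_disc n F -> conformal_on_disc n F -> maps_disc_into_ball n F ->
  0 < a -> 0 < d1 -> d1 <= x * x + y * y <= d2 -> d2 < 1 ->
  (forall u v, u * u + v * v = d1 -> sqnorm n (F u v) <= Rpower d1 a) ->
  Rpower (x * x + y * y) (- a) * sqnorm n (F x y) <= Rpower d2 (- a).
Proof.
  intros HF HC HB Ha Hd1 Hr Hd2 Hinner.
  apply Rle_plus_epsilon; intros eta Heta.
  destruct (annulus_max_on_boundary (perturbed_ratio n F a eta) d1 d2 x y) as [cx [cy [Hc Hle]]];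
    [lra | lra | | | exact Hr |].
  { intros u v Huv; apply perturbed_ratio_jcont; [exact HF | lra]. }
  { intros u v Huv; apply perturbed_ratio_no_axis_max; [exact HF | exact HC | exact Heta | lra]. }
  unfold perturbed_ratio, weight in Hle.
  assert (Hrc : cx * cx + cy * cy <= 1) by lra.
  assert (Hc_bound : Rpower (cx * cx + cy * cy) (- a) * sqnorm n (F cx cy) <= Rpower d2 (- a)).
  { destruct Hc as [Hc | Hc]; rewrite Hc.
    - apply Rle_trans with (Rpower d1 (- a) * Rpower d1 a).
      + apply Rmult_le_compat_l; [left; apply exp_pos | now apply Hinner].
      + rewrite Rpower_opp_mult by lra. apply Rpower_neg_ge1; [lra | split; lra].
    - assert (HS : sqnorm n (F cx cy) < 1) by (apply HB; unfold in_disc; lra).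
      pose proof (exp_pos (- a * ln d2)); unfold Rpower; nra. }
  pose proof (sqnorm_ge0 n (F x y)); pose proof (sqnorm_ge0 n (F cx cy)).
  assert (0 <= eta * (x * x + y * y)) by (apply Rmult_le_pos; nra).
  unfold Rpower in *. nra.
Qed.

Lemma Rabs_le_between0 b c : Rmin 0 b <= c <= Rmax 0 b -> Rabs c <= Rabs b.
Proof.
  unfold Rmin, Rmax; destruct (Rle_dec 0 b); intros Hc;
    [rewrite (Rabs_right b) | rewrite (Rabs_left b)]; try lra; apply Rabs_le; lra.
Qed.

Lemma Rabs_sub_le_of_derive_bound (g dg : R -> R) b M :
  (forall c, Rabs c <= Rabs b -> derivable_pt_lim g c (dg c) /\ Rabs (dg c) <= M) ->
  Rabs (g b - g 0) <= M * Rabs b.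
Proof.
  intros H.
  destruct (MVT_abs g dg 0 b) as [c [Hc Hcb]].
  { intros c Hc; now apply H, Rabs_le_between0. }
  rewrite Hc, Rminus_0_r. apply Rmult_le_compat_r; [apply Rabs_pos|].
  now apply H, Rabs_le_between0.
Qed.

Lemma Rabs_lt_of_sqr_lt x d : 0 < d -> x * x < d * d -> Rabs x < d.
Proof.
  intros Hd Hx. apply Rabs_def1; nra.
Qed.

Lemma sqr_le_of_abs_le_sum f x y M : 0 <= M -> Rabs f <= M * (Rabs x + Rabs y) ->
  f * f <= 2 * M * M * (x * x + y * y).
Proof.
  intros HM Hf.
  assert (Habs2 : forall t, t * t = Rabs t * Rabs t).
  { intros t; rewrite <- Rabs_mult; symmetry; apply Rabs_pos_eq, Rle_0_sqr. }
  rewrite (Habs2 x), (Habs2 y), (Habs2 f).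
  pose proof (Rabs_pos x); pose proof (Rabs_pos y); pose proof (Rabs_pos f).
  apply Rle_trans with ((M * (Rabs x + Rabs y)) * (M * (Rabs x + Rabs y))).
  - apply Rmult_le_compat; assumption.
  - pose proof (Rle_0_sqr (M * (Rabs x - Rabs y))); unfold Rsqr in *; nra.
Qed.

Lemma sqr_le_quadratic_near_origin (f : R -> R -> R) :
  (forall x y, in_disc x y -> ex_derive (fun t => f t y) x /\ ex_derive (fun t => f x t) y) ->
  jcont (dx f) 0 0 -> jcont (dy f) 0 0 -> f 0 0 = 0 ->
  exists C d, 0 <= C /\ 0 < d /\
    forall x y, x * x + y * y < d -> f x y * f x y <= C * (x * x + y * y).
Proof.
  intros Hder Hjx Hjy Hf0.
  destruct (jcont_box _ _ _ Hjx 1 Rlt_0_1) as [ex [Hex Bx]].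
  destruct (jcont_box _ _ _ Hjy 1 Rlt_0_1) as [ey [Hey By]].
  set (M := Rabs (dx f 0 0) + Rabs (dy f 0 0) + 1).
  assert (HM : 0 <= M) by (pose proof (Rabs_pos (dx f 0 0)); pose proof (Rabs_pos (dy f 0 0)); unfold M; lra).
  set (d := Rmin (Rmin ex ey) (1 / 2)).
  assert (Hd : 0 < d) by (repeat apply Rmin_pos; lra).
  assert (Hdx : d <= ex) by (eapply Rle_trans; apply Rmin_l).
  assert (Hdy : d <= ey) by (eapply Rle_trans; [apply Rmin_l | apply Rmin_r]).
  assert (Hd2 : d <= 1 / 2) by apply Rmin_r.
  assert (Hbox : forall u v, Rabs u < d -> Rabs v < d -> in_disc u v).
  { intros u v Hu Hv; apply Rabs_def2 in Hu; apply Rabs_def2 in Hv; unfold in_disc; nra. }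
  exists (2 * M * M), (d * d); split; [nra | split; [nra |]].
  intros x y Hr.
  assert (Hx : Rabs x < d) by (apply Rabs_lt_of_sqr_lt; nra).
  assert (Hy : Rabs y < d) by (apply Rabs_lt_of_sqr_lt; nra).
  assert (E1 : Rabs (f x y - f 0 y) <= M * Rabs x).
  { apply (Rabs_sub_le_of_derive_bound (fun t => f t y) (fun t => dx f t y)).
    intros c Hc; split.
    - apply is_derive_Reals, Derive_correct, (Hder c y (Hbox c y ltac:(lra) Hy)).
    - assert (Hb := Bx c y ltac:(rewrite Rminus_0_r; lra) ltac:(rewrite Rminus_0_r; lra)).
      pose proof (Rabs_triang_inv (dx f c y) (dx f 0 0)); pose proof (Rabs_pos (dy f 0 0)).
      unfold M; lra. }
  assert (E2 : Rabs (f 0 y - f 0 0) <= M * Rabs y).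
  { apply (Rabs_sub_le_of_derive_bound (fun t => f 0 t) (fun t => dy f 0 t)).
    intros c Hc; split.
    - apply is_derive_Reals, Derive_correct,
        (Hder 0 c (Hbox 0 c ltac:(rewrite Rabs_R0; lra) ltac:(lra))).
    - assert (Hb := By 0 c ltac:(rewrite Rminus_0_r, Rabs_R0; lra) ltac:(rewrite Rminus_0_r; lra)).
      pose proof (Rabs_triang_inv (dy f 0 c) (dy f 0 0)); pose proof (Rabs_pos (dx f 0 0)).
      unfold M; lra. }
  rewrite Hf0, Rminus_0_r in E2.
  apply sqr_le_of_abs_le_sum; [exact HM|].
  replace (f x y) with ((f x y - f 0 y) + f 0 y) by ring.
  eapply Rle_trans; [apply Rabs_triang | lra].
Qed.

Lemma sqnorm_le_quadratic_near_origin n F :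
  harmonic_on_disc n F -> (forall i, (i < n)%nat -> F 0 0 i = 0) ->
  exists C d, 0 <= C /\ 0 < d /\
    forall x y, x * x + y * y < d -> sqnorm n (F x y) <= C * (x * x + y * y).
Proof.
  intros HF H0.
  assert (Hdisc0 : in_disc 0 0) by (unfold in_disc; lra).
  assert (Hk : forall k, (k <= n)%nat -> exists C d, 0 <= C /\ 0 < d /\
    forall x y, x * x + y * y < d -> sqnorm k (F x y) <= C * (x * x + y * y)).
  { induction k as [| k IH]; intros Hkn.
    - exists 0, 1; simpl; repeat split; intros; lra.
    - destruct (IH ltac:(lia)) as [C1 [d1 [HC1 [Hd1 B1]]]].
      destruct (sqr_le_quadratic_near_origin (Defs.comp F k)) as [C2 [d2 [HC2 [Hd2 B2]]]].
      + intros x y Hxy; split; apply (HF x y Hxy k ltac:(lia)).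
      + apply (harmonic_jcont_dx n F HF); [exact Hdisc0 | lia].
      + apply (harmonic_jcont_dy n F HF); [exact Hdisc0 | lia].
      + apply H0; lia.
      + exists (C1 + C2), (Rmin d1 d2); repeat split; [lra | now apply Rmin_pos |].
        intros x y Hr; simpl.
        pose proof (Rmin_l d1 d2); pose proof (Rmin_r d1 d2).
        specialize (B1 x y ltac:(lra)); specialize (B2 x y ltac:(lra)).
        unfold Defs.comp in B2; lra. }
  exact (Hk n (Nat.le_refl n)).
Qed.

Lemma exists_circle_sqnorm_le_Rpower n F a m :
  harmonic_on_disc n F -> (forall i, (i < n)%nat -> F 0 0 i = 0) -> a < 1 -> 0 < m ->
  exists d1, 0 < d1 <= m /\
    forall u v, u * u + v * v = d1 -> sqnorm n (F u v) <= Rpower d1 a.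
Proof.
  intros HF H0 Ha Hm.
  destruct (sqnorm_le_quadratic_near_origin n F HF H0) as [C [d [HC [Hd Hbound]]]].
  set (q := Rpower (/ (C + 1)) (/ (1 - a))).
  assert (Hq : 0 < q) by apply exp_pos.
  set (d1 := Rmin (Rmin m (d / 2)) q).
  assert (Hd1 : 0 < d1) by (repeat apply Rmin_pos; lra).
  assert (Hd1m : d1 <= m) by (eapply Rle_trans; apply Rmin_l).
  assert (Hd1d : d1 <= d / 2) by (eapply Rle_trans; [apply Rmin_l | apply Rmin_r]).
  assert (Hd1q : d1 <= q) by apply Rmin_r.
  exists d1; split; [lra|]; intros u v Huv.
  (* [C d1 = C d1^(1-a) d1^a] and [d1^(1-a) <= q^(1-a) = 1/(C+1)]. *)
  assert (Hsmall : Rpower d1 (1 - a) <= / (C + 1)).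
  { replace (/ (C + 1)) with (Rpower q (1 - a)).
    - apply Rle_Rpower_l; lra.
    - unfold q; rewrite Rpower_mult, Rinv_l, Rpower_1 by (try apply Rinv_0_lt_compat; lra).
      reflexivity. }
  assert (Hsplit : d1 = Rpower d1 (1 - a) * Rpower d1 a).
  { rewrite <- Rpower_plus; replace (1 - a + a) with 1 by ring; now rewrite Rpower_1. }
  apply Rle_trans with (C * d1); [rewrite <- Huv; apply Hbound; lra|].
  rewrite Hsplit at 1.
  assert (Hpa : 0 < Rpower d1 a) by apply exp_pos.
  assert (C * / (C + 1) <= 1).
  { apply (Rmult_le_reg_r (C + 1)); [lra|]. rewrite Rmult_assoc, Rinv_l; lra. }
  apply Rle_trans with (C * / (C + 1) * Rpower d1 a); [| nra].
  rewrite <- Rmult_assoc. apply Rmult_le_compat_r; [lra|]. apply Rmult_le_compat_l; lra.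
Qed.

Lemma le_of_left_limit (S t1 : R) (f : R -> R) :
  t1 < 1 -> (forall t, t1 < t < 1 -> S <= f t) -> continuous f 1 -> S <= f 1.
Proof.
  intros Ht1 Hle Hf.
  apply (filterlim_le (F := at_left 1) (fun _ => S) f S (f 1)).
  - assert (Hd : 0 < 1 - t1) by lra.
    exists (mkposreal _ Hd); intros t Ht Hlt; apply Hle.
    apply Rabs_lt_between' in Ht; simpl in Ht; lra.
  - apply filterlim_const.
  - eapply filterlim_filter_le_1; [| exact Hf]. intros P HP; now apply filter_le_within.
Qed.

(* For [r < t < 1] the annulus bound with exponent [a = t] and outer radius [d2 = t]
   gives [|F|^2 <= r^t t^(-t)], which tends to [r] as [t -> 1]. *)
Lemma schwarz_lemma n F x y :
  harmonic_on_disc n F -> conformal_on_disc n F -> maps_disc_into_ball n F ->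
  (forall i, (i < n)%nat -> F 0 0 i = 0) -> in_disc x y ->
  sqnorm n (F x y) <= x * x + y * y.
Proof.
  intros HF HC HB H0 Hdisc; unfold in_disc in Hdisc.
  set (r := x * x + y * y) in *.
  destruct (Rle_lt_or_eq_dec 0 r ltac:(unfold r; nra)) as [Hr | Hr].
  2:{ assert (Hx : x = 0) by (unfold r in Hr; nra); assert (Hy : y = 0) by (unfold r in Hr; nra).
      subst x y; rewrite (sqnorm_ext n _ (fun i => 0 * F 0 0 i)) by (intros i Hi; rewrite H0 by exact Hi; ring).
      rewrite sqnorm_scal; lra. }
  set (f := fun t => Rpower r t * Rpower t (- t)).
  replace r with (f 1)
    by (unfold f; rewrite Rpower_1 by lra; unfold Rpower; rewrite ln_1, Rmult_0_r, exp_0; ring).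
  apply (le_of_left_limit _ r); [lra | | ].
  - intros t Ht.
    destruct (exists_circle_sqnorm_le_Rpower n F t r HF H0 ltac:(lra) Hr) as [d1 [Hd1 Hcircle]].
    assert (Hw := weighted_sqnorm_le_outer n F t d1 t x y HF HC HB ltac:(lra) ltac:(lra)
                    ltac:(fold r; lra) ltac:(lra) Hcircle).
    fold r in Hw.
    replace (sqnorm n (F x y)) with (Rpower r t * (Rpower r (- t) * sqnorm n (F x y)))
      by (rewrite <- Rmult_assoc, (Rmult_comm (Rpower r t)), Rpower_opp_mult by lra; ring).
    apply Rmult_le_compat_l; [left; apply exp_pos | exact Hw].
  - apply (ex_derive_continuous (V := R_NormedModule)); unfold f, Rpower; auto_derive; lra.
Qed.

(* Compare [F] at [z0] and at [t z0] with [t = 1 - s]: [|F(z0)| = 1], [|F(t z0)| <= t], and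
   [F(z0) = F(t z0) + s w + o(s)] with [w = dF(z0) z0]; hence [1 <= t + s |w| + o(s)]. *)
Lemma radial_derivative_vnorm_ge1 n F x0 y0 a b :
  (forall x y, in_disc x y -> sqnorm n (F x y) <= x * x + y * y) ->
  x0 * x0 + y0 * y0 = 1 -> sqnorm n (F x0 y0) = 1 -> is_differential_at n F x0 y0 a b ->
  1 <= vnorm n (fun i => x0 * a i + y0 * b i).
Proof.
  intros Hschwarz Hz0 HF1 Hdiff.
  set (w := fun i => x0 * a i + y0 * b i).
  apply Rle_plus_epsilon; intros eps Heps.
  destruct (Hdiff eps Heps) as [delta [Hdelta Hd]].
  set (s := Rmin (delta / 2) (1 / 2)).
  assert (Hs : 0 < s) by (apply Rmin_pos; lra).
  assert (Hsd : s <= delta / 2) by apply Rmin_l.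
  assert (Hs2 : s <= 1 / 2) by apply Rmin_r.
  set (t := 1 - s).
  assert (Hdist : (t * x0 - x0) * (t * x0 - x0) + (t * y0 - y0) * (t * y0 - y0) = s * s).
  { replace (s * s) with (s * s * (x0 * x0 + y0 * y0)) by (rewrite Hz0; ring); unfold t; ring. }
  assert (Hrt : (t * x0) * (t * x0) + (t * y0) * (t * y0) = t * t).
  { replace (t * t) with (t * t * (x0 * x0 + y0 * y0)) by (rewrite Hz0; ring); ring. }
  specialize (Hd (t * x0) (t * y0) ltac:(left; unfold in_disc; unfold t in *; nra)
                 ltac:(rewrite Hdist; nra)).
  rewrite Hdist, sqrt_square in Hd by lra.
  set (E := fun i => F (t * x0) (t * y0) i - F x0 y0 i
                     - ((t * x0 - x0) * a i + (t * y0 - y0) * b i)) in Hd.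
  assert (Hin : vnorm n (F (t * x0) (t * y0)) <= t).
  { apply Rle_trans with (sqrt (t * t)); [| rewrite sqrt_square; unfold t; lra].
    apply sqrt_le_1_alt; rewrite <- Hrt; apply Hschwarz; unfold in_disc, t in *; nra. }
  assert (Hsplit : vnorm n (F x0 y0) <=
                   vnorm n (F (t * x0) (t * y0)) + s * vnorm n w + vnorm n E).
  { rewrite <- (Rabs_pos_eq s), <- (Rmult_1_l (vnorm n E)), <- Rabs_R1, <- (Rabs_Ropp 1),
      <- !vnorm_scal by lra.
    eapply Rle_trans; [| apply Rplus_le_compat_r, vnorm_triangle].
    eapply Rle_trans; [| apply vnorm_triangle].
    right; apply vnorm_ext; intros i Hi; unfold E, w, t; ring. }
  unfold vnorm at 1 in Hsplit; rewrite HF1, sqrt_1 in Hsplit.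
  fold (vnorm n E) in Hd.
  apply (Rmult_le_reg_l s); [exact Hs | unfold t in *; lra].
Qed.

Lemma opnorm_ge_unit n a b u v : u * u + v * v = 1 ->
  Rbar_le (vnorm n (fun i => u * a i + v * b i)) (opnorm n a b).
Proof.
  intros Huv; unfold opnorm.
  destruct (Lub_Rbar_correct (fun r => exists u v : R, u * u + v * v = 1 /\
              r = sqrt (sqnorm n (fun i => u * a i + v * b i)))) as [Hub _].
  apply Hub; now exists u, v.
Qed.

Theorem theorem1p3 (n : nat) (F : R -> R -> nat -> R) (x0 y0 : R) :
  (3 <= n)%nat ->
  conformal_minimal_immersion n F ->
  maps_disc_into_ball n F ->
  (forall i, (i < n)%nat -> F 0 0 i = 0) ->
  x0 * x0 + y0 * y0 = 1 ->
  extends_to n F x0 y0 ->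
  sqnorm n (F x0 y0) = 1 ->
  forall a b : nat -> R, is_differential_at n F x0 y0 a b ->
  Rbar_le 1 (opnorm n a b).
Proof.
  intros _ [HF [_ HC]] HB H0 Hz0 _ HF1 a b Hdiff.
  apply Rbar_le_trans with (vnorm n (fun i => x0 * a i + y0 * b i)).
  - apply (radial_derivative_vnorm_ge1 n F); [| exact Hz0 | exact HF1 | exact Hdiff].
    intros x y; now apply schwarz_lemma.
  - now apply opnorm_ge_unit.
Qed.
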